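(* Let $1\le p\le N$ and let $\Omega=\bm\omega^1\wedge\dots\wedge\bm\omega^p$ be a simple $p$-form. Then each of $\vec\omega^1,\dots,\vec\omega^p$ is an eigenvector of its superenergy tensor $T_{ab}\{\Omega_{[p]}\}$, all with the same eigenvalue $\frac{(-1)^{p-1}(\Omega\cdot\Omega)}{2\,p!}$, i.e. $\omega^i_aT_b{}^a\{\Omega_{[p]}\}=\frac{(-1)^{p-1}(\Omega\cdot\Omega)}{2\,p!}\omega^i_b$ for $i=1,\dots,p$.
   Context: Lorentzian metric $g_{ab}$ of signature $(+,-,\dots,-)$ in dimension $N$; $\Omega\cdot\Omega$ is full contraction; simple $p$-form: wedge product of $p$ linearly independent 1-forms $\bm\omega^i$, with $\vec\omega^i$ the corresponding vectors. Superenergy tensor: $T_{ab}\{\Omega_{[p]}\}=\frac{(-1)^{p-1}}{(p-1)!}[\Omega_{a a_2\dots a_p}\Omega_b{}^{a_2\dots a_p}-\frac{1}{2p}(\Omega\cdot\Omega)g_{ab}]$ (equal to $\frac12 f^2 g_{ab}$ if $\Omega=f\eta$ is an $N$-form). *)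

From HB Require Import structures.
From mathcomp Require Import all_boot all_order all_algebra.
Set Implicit Arguments. Unset Strict Implicit. Unset Printing Implicit Defensive.
Import Order.TTheory GRing.Theory Num.Theory.
Local Open Scope ring_scope.

(* Components are taken w.r.t. a fixed basis of an N-dimensional real vector
   space.  The metric g_{ab} is an N x N matrix; g^{ab} is its inverse. *)

Definition lorentzian (R : realFieldType) (N : nat) (g : 'M[R]_N) : Prop :=
  exists P : 'M[R]_N, P \in unitmx /\
    P^T *m g *m P = diag_mx (\row_(i < N) (if (i : nat) == 0%N then 1 else -1)).

Definition ginv (R : realFieldType) (N : nat) (g : 'M[R]_N) : 'M[R]_N := invmx g.

(* A covariant p-tensor is given by its components Om_{a_1 ... a_p},
   indexed by functions A : 'I_p -> 'I_N (A k = a_(k+1)). *)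
Definition ptensor (R : realFieldType) (N p : nat) := {ffun 'I_p -> 'I_N} -> R.

(* wedge product of p one-forms, the rows of w (row i = omega^(i+1)):
   (omega^1 /\ ... /\ omega^p)_{a_1..a_p} = det [omega^i_{a_j}] *)
Definition wedge (R : realFieldType) (N p : nat) (w : 'M[R]_(p, N))
  : ptensor R N p :=
  fun A => \det (\matrix_(i < p, j < p) w i (A j)).

Definition fullcontr (R : realFieldType) (N p : nat) (g : 'M[R]_N)
  (Om : ptensor R N p) : R :=
  \sum_(A : {ffun 'I_p -> 'I_N}) \sum_(B : {ffun 'I_p -> 'I_N})
     Om A * Om B * \prod_(k < p) ginv g (A k) (B k).

Definition fcons (N q : nat) (a : 'I_N) (A : {ffun 'I_q -> 'I_N})
  : {ffun 'I_q.+1 -> 'I_N} :=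
  [ffun k : 'I_q.+1 => match unlift ord0 k with Some k' => A k' | None => a end].

(* superenergy tensor of a p-form, p = q+1:
   T_ab = (-1)^(p-1)/(p-1)! [ Om_{a a2..ap} Om_b^{a2..ap} - (1/(2p)) (Om.Om) g_ab ] *)
Definition superenergy (R : realFieldType) (N q : nat) (g : 'M[R]_N)
  (Om : ptensor R N q.+1) (a b : 'I_N) : R :=
  ((-1) ^+ q / (q`!)%:R) *
  ((\sum_(A : {ffun 'I_q -> 'I_N}) \sum_(B : {ffun 'I_q -> 'I_N})
       Om (fcons a A) * Om (fcons b B) * \prod_(k < q) ginv g (A k) (B k))
   - fullcontr g Om / (2 * q.+1)%:R * g a b).

(* Expanding Om = omega^1 /\ ... /\ omega^p along its first index gives
   Om_{a A} = sum_k (-1)^k omega^k_a Om^(k)_A, where Om^(k) omits omega^k.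
   The full contraction of two wedge products of n one-forms is n! times the
   determinant of their Gram matrix, so with G_{ij} = omega^i . omega^j,
   Om_{a A} Om_b^A = (p-1)! sum_{k,j} omega^k_a omega^j_b cof(G)_{kj} and
   Om . Om = p! det G.  Contracting with omega^i, G adj(G) = det G turns the
   first term into (p-1)! det G omega^i_b, and as g is symmetric and invertible
   the trace term becomes (Om . Om)/(2p) omega^i_b.  Both are multiples of
   det G omega^i_b, which yields the eigenvalue. *)

From HB Require Import structures.
From mathcomp Require Import all_boot all_order all_algebra perm ring.
Import Order.TTheory GRing.Theory Num.Theory.
Set Implicit Arguments. Unset Strict Implicit. Unset Printing Implicit Defensive.
Local Open Scope ring_scope.

Section MaximalMinors.
Variable R : comNzRingType.

(* [wedge] over an arbitrary commutative ring: [wedge w] is convertible to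
   [col_minor w]. *)
Definition col_minor n N (X : 'M[R]_(n, N)) (A : {ffun 'I_n -> 'I_N}) : R :=
  \det (\matrix_(i, j) X i (A j)).

Lemma det_trE n (A : 'M[R]_n) :
  \det A = \sum_(s : 'S_n) (-1) ^+ s * \prod_j A (s j) j.
Proof.
rewrite -det_tr; apply: eq_bigr => s _; congr (_ * _).
by apply: eq_bigr => j _; rewrite mxE.
Qed.

Lemma det_mulmx_sum_col_minor n N (Y : 'M[R]_(n, N)) (C : 'M[R]_(N, n)) :
  \det (Y *m C) =
  \sum_(B : {ffun 'I_n -> 'I_N}) (\prod_j C (B j) j) * col_minor Y B.
Proof.
rewrite det_trE.
under eq_bigr => s _.
  rewrite (eq_bigr (fun j => \sum_b Y (s j) b * C b j)); last first.
    by move=> j _; rewrite mxE.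
  rewrite bigA_distr_bigA mulr_sumr.
over.
rewrite exchange_big /=; apply: eq_bigr => B _.
rewrite /col_minor det_trE mulr_sumr; apply: eq_bigr => s _.
rewrite big_split /= [RHS]mulrCA; congr (_ * _).
rewrite mulrC; congr (_ * _).
by apply: eq_bigr => j _; rewrite mxE.
Qed.

(* The sum runs over all index maps, not only increasing ones: hence n! in
   place of the Cauchy-Binet formula. *)
Lemma sum_col_minorM n N (X Z : 'M[R]_(n, N)) :
  \sum_(A : {ffun 'I_n -> 'I_N}) col_minor X A * col_minor Z A
  = n`!%:R * \det (X *m Z^T).
Proof.
transitivity (\sum_(s : 'S_n) (-1) ^+ s * \det (X *m \matrix_(a, k) Z (s k) a)).
  under eq_bigr do rewrite [col_minor Z _]det_trE mulr_sumr.
  rewrite exchange_big /=; apply: eq_bigr => s _.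
  rewrite det_mulmx_sum_col_minor mulr_sumr; apply: eq_bigr => A _.
  rewrite mulrCA [_ * col_minor X A]mulrC; congr (_ * (_ * _)).
  by apply: eq_bigr => k _; rewrite !mxE.
have col_permXZ (s : 'S_n) : X *m \matrix_(a, k) Z (s k) a = col_perm s (X *m Z^T).
  by apply/matrixP => i j; rewrite !mxE; apply: eq_bigr => a _; rewrite !mxE.
under eq_bigr => s _.
  rewrite col_permXZ col_permE det_mulmx det_perm odd_permV mulrCA.
  rewrite -signr_addb addbb mulr1.
over.
by rewrite sumr_const card_Sn mulr_natl.
Qed.

Lemma contr_col_minor n N (X Y : 'M[R]_(n, N)) (h : 'M[R]_N) :
  \sum_(A : {ffun 'I_n -> 'I_N}) \sum_(B : {ffun 'I_n -> 'I_N})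
     col_minor X A * col_minor Y B * \prod_(k < n) h (A k) (B k)
  = n`!%:R * \det (X *m h *m Y^T).
Proof.
rewrite -mulmxA -[h *m Y^T]trmxK trmx_mul trmxK -sum_col_minorM.
apply: eq_bigr => A _.
under eq_bigr do rewrite -mulrA.
rewrite -mulr_sumr; congr (_ * _).
have -> : col_minor (Y *m h^T) A = \det (Y *m \matrix_(b, k) h (A k) b).
  rewrite /col_minor; congr (\det _); apply/matrixP => i k.
  by rewrite !mxE; apply: eq_bigr => b _; rewrite !mxE.
rewrite det_mulmx_sum_col_minor; apply: eq_bigr => B _; rewrite mulrC; congr (_ * _).
by apply: eq_bigr => k _; rewrite mxE.
Qed.

Lemma col_minor_fcons n N (X : 'M[R]_(n.+1, N)) c (B : {ffun 'I_n -> 'I_N}) :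
  col_minor X (fcons c B) =
  \sum_(k < n.+1) (-1) ^+ k * X k c * col_minor (row' k X) B.
Proof.
rewrite /col_minor (expand_det_col _ ord0); apply: eq_bigr => k _.
rewrite /cofactor !mxE /fcons ffunE unlift_none addn0 mulrCA mulrA; congr (_ * \det _).
by apply/matrixP => x y; rewrite !mxE ffunE liftK.
Qed.

Lemma row'_col'_mulmx_tr n m N (X : 'M[R]_(n.+1, N)) (Y : 'M[R]_(m.+1, N)) h k j :
  row' k X *m h *m (row' j Y)^T = row' k (col' j (X *m h *m Y^T)).
Proof.
apply/matrixP => x y; rewrite !mxE; apply: eq_bigr => c _; rewrite !mxE.
by congr (_ * _); apply: eq_bigr => a _; rewrite !mxE.
Qed.

Lemma contr_col_minor_fcons n N (X Y : 'M[R]_(n.+1, N)) (h : 'M[R]_N) b c :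
  \sum_(A : {ffun 'I_n -> 'I_N}) \sum_(B : {ffun 'I_n -> 'I_N})
     col_minor X (fcons b A) * col_minor Y (fcons c B) * \prod_(l < n) h (A l) (B l)
  = n`!%:R * \sum_(k < n.+1) \sum_(j < n.+1)
      X k b * Y j c * cofactor (X *m h *m Y^T) k j.
Proof.
rewrite [LHS]pair_big /=.
under eq_bigr do rewrite !col_minor_fcons big_distrlr pair_big mulr_suml /=.
rewrite exchange_big [RHS]mulr_sumr; under [RHS]eq_bigr do rewrite mulr_sumr.
rewrite [RHS]pair_big /=; apply: eq_bigr => -[k j] _ /=.
rewrite /cofactor -row'_col'_mulmx_tr mulrCA [_`!%:R * _]mulrCA -contr_col_minor.
rewrite [in RHS]pair_big /= !mulr_sumr.
by apply: eq_bigr => -[A B] _ /=; rewrite exprD; ring.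
Qed.

Lemma contr_cofactor_expansion n N (X Y : 'M[R]_(n.+1, N)) (h : 'M[R]_N) i b :
  \sum_(c < N) (X *m h) i c *
     (\sum_(k < n.+1) \sum_(j < n.+1) X k b * Y j c * cofactor (X *m h *m Y^T) k j)
  = \det (X *m h *m Y^T) * X i b.
Proof.
set G := X *m h *m Y^T.
transitivity ((G *m \adj G *m X) i b); last by rewrite mul_mx_adj mul_scalar_mx mxE.
rewrite mxE; under eq_bigr do rewrite mulr_sumr.
rewrite exchange_big /=; apply: eq_bigr => k _.
rewrite [(G *m _) i k]mxE mulr_suml; under eq_bigr do rewrite mulr_sumr.
rewrite exchange_big /=; apply: eq_bigr => j _.
rewrite [G i j]mxE !mulr_suml; apply: eq_bigr => c _.
by rewrite !mxE; ring.
Qed.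

Lemma contr_row_col_minor_fcons n N (X Y : 'M[R]_(n.+1, N)) (h : 'M[R]_N) i b :
  \sum_(c < N) (X *m h) i c *
    (\sum_(A : {ffun 'I_n -> 'I_N}) \sum_(B : {ffun 'I_n -> 'I_N})
       col_minor X (fcons b A) * col_minor Y (fcons c B) * \prod_(l < n) h (A l) (B l))
  = n`!%:R * \det (X *m h *m Y^T) * X i b.
Proof.
under eq_bigr do rewrite contr_col_minor_fcons mulrCA.
by rewrite -mulr_sumr contr_cofactor_expansion mulrA.
Qed.

Lemma sum_mulmx_row m n N (X : 'M[R]_(m, n)) (h : 'M[R]_(n, N)) i (f : 'I_N -> R) :
  \sum_(a < n) X i a * (\sum_(c < N) h a c * f c) = \sum_(c < N) (X *m h) i c * f c.
Proof.
under eq_bigr do rewrite mulr_sumr.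
rewrite exchange_big /=; apply: eq_bigr => c _.
by rewrite mxE mulr_suml; apply: eq_bigr => a _; rewrite mulrA.
Qed.

End MaximalMinors.

Section LorentzianMetric.
Variables (R : realFieldType) (N : nat) (g : 'M[R]_N).
Hypothesis hg : lorentzian g.

Lemma lorentzian_unitmx : g \in unitmx.
Proof.
have [P [_ hD]] := hg.
have : \det (P^T *m g *m P) != 0.
  rewrite hD det_diag; apply/prodf_neq0 => k _; rewrite mxE.
  by case: ifP => _; rewrite ?oppr_eq0 oner_eq0.
rewrite unitmxE unitfE !det_mulmx; apply: contra => /eqP ->.
by rewrite mulr0 mul0r.
Qed.

Lemma lorentzian_sym : g^T = g.
Proof.
have [P [hP hD]] := hg.
have hPT : P^T \in unitmx by rewrite unitmx_tr.
apply: (can_inj (mulKmx hPT)); apply: (can_inj (mulmxK hP)).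
by rewrite hD -tr_diag_mx -hD !trmx_mul trmxK mulmxA.
Qed.

End LorentzianMetric.

Theorem mainTheorem6 (R : realFieldType) (N q : nat) (g : 'M[R]_N)
  (hg : lorentzian g) (hpN : (q.+1 <= N)%N) (w : 'M[R]_(q.+1, N))
  (hw : row_free w) :
  forall (i : 'I_q.+1) (b : 'I_N),
    \sum_(a < N) w i a * (\sum_(c < N) ginv g a c * superenergy g (wedge w) b c)
    = (-1) ^+ q * fullcontr g (wedge w) / (2 * (q.+1)`!)%:R * w i b.
Proof.
move=> i b; set G := w *m ginv g *m w^T.
have fullcontr_gram : fullcontr g (wedge w) = (q.+1)`!%:R * \det G :=
  contr_col_minor w w (ginv g).
have metric_trace : \sum_(c < N) (w *m ginv g) i c * g b c = w i b.
  transitivity ((w *m ginv g *m g^T) i b).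
    by rewrite mxE; apply: eq_bigr => c _; congr (_ * _); rewrite mxE.
  by rewrite (lorentzian_sym hg) mulmxKV // lorentzian_unitmx.
rewrite sum_mulmx_row /superenergy.
under eq_bigr do rewrite mulrCA mulrBr [_ * (_ * g b _)]mulrCA.
rewrite -mulr_sumr big_split sumrN -!mulr_sumr /= metric_trace.
rewrite [X in _ * (X - _)]contr_row_col_minor_fcons fullcontr_gram -/G factS !natrM.
have q_fact_neq0 : (q`!)%:R != 0 :> R by rewrite pnatr_eq0 -lt0n fact_gt0.
have p_neq0 : (q.+1)%:R != 0 :> R by rewrite pnatr_eq0.
by field; rewrite nat1r q_fact_neq0 p_neq0.
Qed.
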